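(* Let $w$ be a nonempty string, and for $1 \le j \le |\mathit{LFCand}(w)|$ let $s_j$ be the $j$-th shortest string of $\mathit{LFCand}(w)$. Then $|s_{j+1}| > 2|s_j|$ for every $1 \le j < |\mathit{LFCand}(w)|$.
   Context: Let $\Sigma$ be a finite ordered alphabet, $\Sigma^+$ the set of nonempty strings over $\Sigma$. For nonempty strings $x,y$, write $x \prec y$ if either $x$ is a proper prefix of $y$, or at the first position $k$ where $x$ and $y$ differ we have $x[k] \prec y[k]$. For a set $S$ of nonempty strings, $\min_\prec S$ is its lexicographically smallest element. $\mathit{Suffix}(w)$ denotes the set of (nonempty) suffixes of $w$. For a nonempty string $w$, $\mathit{LFCand}(w) = \{x \in \mathit{Suffix}(w) \mid \exists y \in \Sigma^+ \text{ such that } xy = \min_\prec \mathit{Suffix}(wy)\}$ (its elements are suffixes of $w$, hence have distinct lengths). *)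

From mathcomp Require Import all_boot all_order.
Set Implicit Arguments. Unset Strict Implicit. Unset Printing Implicit Defensive.
Import Order.TTheory.
Local Open Scope order_scope.

Fixpoint lex_lt {d : Order.disp_t} {T : orderType d} (x y : seq T) : bool :=
  match x, y with
  | [::], [::] => false
  | [::], _ :: _ => true
  | _ :: _, [::] => false
  | a :: x', b :: y' => (a < b) || ((a == b) && lex_lt x' y')
  end.

Definition is_suffix {T : eqType} (x w : seq T) : bool :=
  (0 < size x)%N && (drop (size w - size x) w == x).

Definition is_min_suffix {d : Order.disp_t} {T : orderType d} (x v : seq T) : Prop :=
  is_suffix x v /\ forall z, is_suffix z v -> z = x \/ lex_lt x z.

Definition LFCand {d : Order.disp_t} {T : orderType d} (w x : seq T) : Prop :=
  is_suffix x w /\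
  exists y : seq T, (0 < size y)%N /\ is_min_suffix (x ++ y) (w ++ y).

From mathcomp Require Import all_boot all_order zify.
Import Order.TTheory.

(* If s and s' are in LFCand(w) with |s| < |s'|, the extensions witnessing
   them give (s y < s' y) and (s' y' < s y'); a comparison that flips when the
   common tail changes can only be decided past the end of s, so s is a
   prefix of s'. Being also a suffix, s is a border of s' with period
   p = |s'| - |s|. If p <= |s|, write s' = u s and s = u v with |u| = p;
   cancelling u in s y < u s y gives v y < s y, although v y is a suffix of
   w y and s y is the least one. The bound holds for any
   two candidates. *)

Section LexSuffix.
Context {d : Order.disp_t} {T : orderType d}.
Implicit Types a b s u w x y z : seq T.

Lemma lex_lt_asym a b : lex_lt a b -> ~~ lex_lt b a.
Proof.
elim: a b => [|c a IH] [|e b] //=.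
by case: (ltgtP c e) => //= _; apply: IH.
Qed.

Lemma lex_lt_catl u a b : lex_lt (u ++ a) (u ++ b) = lex_lt a b.
Proof. by elim: u => [|c u IH] //=; rewrite ltxx eqxx. Qed.

Lemma lex_lt_cat_mismatch {a b} y y' :
  (size a <= size b)%N -> take (size a) b != a ->
  lex_lt (a ++ y) (b ++ y) = lex_lt (a ++ y') (b ++ y').
Proof.
elim: a b => [|c a IH] [|e b] //=.
rewrite ltnS eqseq_cons => le_ab; case: (eqVneq e c) => [->|//] /= ne_ab.
by rewrite ltxx /= (IH b).
Qed.

Lemma size_suffix {x w} : is_suffix x w -> (size x <= size w)%N.
Proof. by case/andP=> _ /eqP <-; rewrite size_drop leq_subr. Qed.

Lemma is_suffix_catr y {x w} : is_suffix x w -> is_suffix (x ++ y) (w ++ y).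
Proof.
move=> sxw; have le_xw := size_suffix sxw; case/andP: sxw => x0 /eqP dx.
rewrite /is_suffix !size_cat addn_gt0 x0 subnDr drop_cat /=.
by rewrite ltn_subrL x0 (leq_trans x0 le_xw) dx.
Qed.

Lemma is_suffix_drop k x w :
  is_suffix x w -> (0 < size (drop k x))%N -> is_suffix (drop k x) w.
Proof.
case/andP=> _ /eqP <-; rewrite drop_drop => dw0.
rewrite /is_suffix dw0 size_drop.
by rewrite size_drop in dw0; rewrite subKn ?eqxx // ltnW // -subn_gt0.
Qed.

Lemma is_suffix_drop_catr {k x w} y : (k <= size x)%N -> (0 < size y)%N ->
  is_suffix x w -> is_suffix (drop k x ++ y) (w ++ y).
Proof.
move=> le_kx y0 sxw.
have -> : drop k x ++ y = drop k (x ++ y).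
  by rewrite -{2}(cat_take_drop k x) -catA drop_size_cat // size_takel.
apply: is_suffix_drop; first exact: is_suffix_catr.
by rewrite size_drop size_cat; lia.
Qed.

Lemma suffix_nested {s s' w} : is_suffix s w -> is_suffix s' w ->
  (size s <= size s')%N -> drop (size s' - size s) s' = s.
Proof.
move=> sw s'w le_ss'; have := size_suffix sw; have := size_suffix s'w.
case/andP: sw => _ /eqP ds; case/andP: s'w => _ /eqP ds' le_s'w le_sw.
rewrite -[X in drop _ X = _]ds' drop_drop -[RHS]ds; congr drop.
by rewrite addnC addnBA // subnK.
Qed.

Lemma lex_lt_flip_prefix {a b y y'} : (size a <= size b)%N ->
  lex_lt (a ++ y) (b ++ y) -> lex_lt (b ++ y') (a ++ y') -> take (size a) b = a.
Proof.
move=> le_ab lt_ay lt_by'; apply/eqP/negPn/negP => mismatch.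
move: lt_ay; rewrite (lex_lt_cat_mismatch y y' le_ab mismatch).
exact/negP/lex_lt_asym.
Qed.

Lemma lex_lt_short_border s s' y :
  (size s' <= 2 * size s)%N -> take (size s) s' = s -> drop (size s' - size s) s' = s ->
  lex_lt (s ++ y) (s' ++ y) = lex_lt (drop (size s' - size s) s ++ y) (s ++ y).
Proof.
set p := (size s' - size s)%N => short pre suf.
have le_ps : (p <= size s)%N by rewrite /p; lia.
have us : take p s' = take p s by rewrite -[X in _ = take _ X]pre take_takel.
have -> : s' = take p s ++ s by rewrite -{1}(cat_take_drop p s') suf us.
by rewrite -{1}(cat_take_drop p s) -!catA lex_lt_catl.
Qed.

Lemma min_suffix_lt {x v z} :
  is_min_suffix x v -> is_suffix z v -> size z != size x -> lex_lt x z.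
Proof. by case=> _ minx /minx [->|//]; rewrite eqxx. Qed.

End LexSuffix.

Theorem lemma6 (d : Order.disp_t) (T : finOrderType d) (w s s' : seq T) :
  (0 < size w)%N ->
  LFCand w s -> LFCand w s' ->
  (size s < size s')%N ->
  (forall t, LFCand w t -> ~ (size s < size t < size s')%N) ->
  (2 * size s < size s')%N.
Proof.
move=> _ [sw [y [y0 min_sy]]] [s'w [y' [_ min_s'y']]] lt_ss' _.
have neq_ss' z : size (s ++ z) != size (s' ++ z).
  by rewrite !size_cat eqn_add2r ltn_eqF.
have lt_sy : lex_lt (s ++ y) (s' ++ y).
  by apply: (min_suffix_lt min_sy (is_suffix_catr y s'w)); rewrite eq_sym.
have lt_s'y' := min_suffix_lt min_s'y' (is_suffix_catr y' sw) (neq_ss' y').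
have pre := lex_lt_flip_prefix (ltnW lt_ss') lt_sy lt_s'y'.
have suf := suffix_nested sw s'w (ltnW lt_ss').
rewrite ltnNge; apply/negP => short.
set p := (size s' - size s)%N in suf.
have le_ps : (p <= size s)%N by rewrite /p; lia.
have v_suffix := is_suffix_drop_catr y le_ps y0 sw.
have neq_sv : size (drop p s ++ y) != size (s ++ y).
  by rewrite !size_cat size_drop eqn_add2r; lia.
move: (min_suffix_lt min_sy v_suffix neq_sv).
by apply/negP/lex_lt_asym; rewrite -lex_lt_short_border.
Qed.
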